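(* Let $q$ be a power of $2$ and $n\ge1$ an integer with $\gcd(n+1,q(q^2-1))=1$. Then $C_n(a)$ is LCD for every $a\in\mathbb{F}_q$.
   Context: For $a\in\mathbb{F}_q$ and $n \ge 1$, $T_n(a)$ denotes the $n\times n$ symmetric tridiagonal Toeplitz matrix over $\mathbb{F}_q$ with all diagonal entries equal to $a$, all entries on the first super- and sub-diagonals equal to $1$, and all other entries $0$. $C_n(a)$ is the $[2n,n]$ linear code over $\mathbb{F}_q$ with generator matrix $[I_n \mid T_n(a)]$. A linear code $C$ is LCD if $C\cap C^\perp=\{0\}$ (Euclidean dual). *)

From HB Require Import structures.
From mathcomp Require Import all_boot all_order all_algebra all_field.
Set Implicit Arguments. Unset Strict Implicit. Unset Printing Implicit Defensive.
Import GRing.Theory.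
Local Open Scope ring_scope.

Definition tridiag (F : fieldType) (n : nat) (a : F) : 'M[F]_n :=
  \matrix_(i < n, j < n)
    (if i == j then a
     else if ((i.+1 == j :> nat) || (j.+1 == i :> nat)) then 1 else 0).

Definition genC (F : fieldType) (n : nat) (a : F) : 'M[F]_(n, n + n) :=
  row_mx 1%:M (tridiag n a).

Definition in_code (F : fieldType) (k N : nat) (G : 'M[F]_(k, N)) (v : 'rV[F]_N) : Prop :=
  exists m : 'rV[F]_k, v = m *m G.

Definition edot (F : fieldType) (N : nat) (u v : 'rV[F]_N) : F :=
  \sum_(i < N) u 0 i * v 0 i.

Definition in_dual (F : fieldType) (k N : nat) (G : 'M[F]_(k, N)) (v : 'rV[F]_N) : Prop :=
  forall c, in_code G c -> edot v c = 0.

Definition is_LCD (F : fieldType) (k N : nat) (G : 'M[F]_(k, N)) : Prop :=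
  forall v : 'rV[F]_N, in_code G v -> in_dual G v -> v = 0.

From HB Require Import structures.
From mathcomp Require Import all_boot all_order all_algebra all_field.
From mathcomp Require Import fingroup cyclic ring.
Set Implicit Arguments. Unset Strict Implicit. Unset Printing Implicit Defensive.
Import GRing.Theory.
Local Open Scope ring_scope.

(* Let G = [I | T] with T = T_n(a).  A code with generator matrix G is LCD as
   soon as its Gram matrix G G^T is nonsingular, and here G G^T = I + T^2.  In
   characteristic 2 this is (I + T)^2 = T_n(a+1)^2, so it suffices that every
   tridiagonal matrix T_n(b) is nonsingular.  A row vector u with u T_n(b) = 0
   satisfies a second-order linear recurrence along its coordinates, which
   forces u = u_1 * (U_1, ..., U_n) where U_k = U_k(-b) is the Lucas sequence
   U_{k+2} = c U_{k+1} - U_k; the boundary condition leaves u_1 U_{n+1} = 0.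
   Finally U_{n+1}(c) never vanishes: the companion matrix M of the recurrence
   has M^{k+1} expressed through U_k, U_{k+1}, U_{k+2}; if U_{n+1} = 0, then
   the Cassini identity and characteristic 2 give M^{n+1} = 1, so the order of
   M in GL_2(F_q) divides gcd(n+1, |GL_2(F_q)|) = 1, i.e. M = 1, which it is
   not. *)

Section LucasSequence.
Variable R : comNzRingType.

Fixpoint lucasU (c : R) (k : nat) : R :=
  match k with
  | 0 => 0
  | k1.+1 => if k1 is k0.+1 then c * lucasU c k1 - lucasU c k0 else 1
  end.

Lemma lucasU_SS c k : lucasU c k.+2 = c * lucasU c k.+1 - lucasU c k.
Proof. by []. Qed.

(* Cassini's identity; it records that the companion matrix has determinant 1. *)
Lemma lucasU_cassini c k :
  lucasU c k.+1 ^+ 2 - lucasU c k * lucasU c k.+2 = 1.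
Proof.
elim: k => [|k IH]; first by rewrite /= mul0r subr0 expr1n.
by rewrite -[RHS]IH !lucasU_SS; ring.
Qed.

Definition mx2 (a b c d : R) : 'M[R]_2 :=
  \matrix_(i, j) if i == 0 :> nat then (if j == 0 :> nat then a else b)
                 else (if j == 0 :> nat then c else d).

Lemma mx2_mul a b c d a' b' c' d' :
  mx2 a b c d *m mx2 a' b' c' d' =
  mx2 (a * a' + b * c') (a * b' + b * d') (c * a' + d * c') (c * b' + d * d').
Proof.
apply/matrixP => i j; rewrite !mxE !big_ord_recl big_ord0 !mxE addr0.
by case: i => [[|[|i]] Hi] //; case: j => [[|[|j]] Hj].
Qed.

Lemma mx2_1 : mx2 1 0 0 1 = 1.
Proof.
apply/matrixP => i j; rewrite !mxE.
by case: i => [[|[|i]] Hi] //; case: j => [[|[|j]] Hj].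
Qed.

Definition companion (c : R) : 'M[R]_2 := mx2 c 1 (-1) 0.

Lemma companion_pow c k :
  companion c ^+ k.+1 =
  mx2 (lucasU c k.+2) (lucasU c k.+1) (- lucasU c k.+1) (- lucasU c k).
Proof.
elim: k => [|k IH].
  by rewrite expr1 /companion lucasU_SS /= mulr1 subr0 oppr0.
by rewrite exprSr IH [_ * _]mx2_mul !lucasU_SS; congr mx2; ring.
Qed.

End LucasSequence.

Lemma companion_unit (R : comUnitRingType) (c : R) : companion c \in unitmx.
Proof.
have inv : companion c *m mx2 0 (-1) 1 c = 1.
  by rewrite mx2_mul -mx2_1; congr mx2; ring.
by have [] := mulmx1_unit inv.
Qed.

Lemma coprime_expg_eq1 (gT : finGroupType) (G : {group gT}) (x : gT) k :
  x \in G -> coprime k #|G| -> (x ^+ k = 1)%g -> x = 1%g.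
Proof.
move=> Gx copk xk1; apply/eqP; rewrite -order_eq1 -dvdn1 -(eqP copk) dvdn_gcd.
by rewrite order_dvdn xk1 eqxx order_dvdG.
Qed.

Lemma unitmx_pow_coprime (F : finFieldType) (n : nat) (A : 'M[F]_n.+1) k :
  A \in unitmx -> coprime k #|('GL_n.+1[F])%g| -> A ^+ k = 1 -> A = 1.
Proof.
move=> Aunit copk Ak1; pose u : {'GL_n.+1[F]} := FinRing.unit _ Aunit.
have : u = 1%g.
  apply: (coprime_expg_eq1 _ copk); first by rewrite inE.
  by apply: val_inj; rewrite FinRing.val_unitX.
by move/(congr1 val).
Qed.

(* |GL_2(F_q)| = q (q-1)^2 (q+1) has the same prime divisors as q (q^2 - 1). *)
Lemma coprime_card_GL2 m q :
  coprime m (q * (q ^ 2 - 1)) -> coprime m (q * q.-1 ^ 2 * q.+1).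
Proof.
have -> : (q ^ 2 - 1 = q.-1 * q.+1)%N by rewrite -(exp1n 2) subn_sqr subn1 addn1.
by rewrite !coprimeMr => /and3P [-> -> ->].
Qed.

(* In characteristic 2, U_{n+1}(c) = 0 would make the companion matrix an
   element of GL_2 of order dividing n + 1. *)
Lemma lucasU_char2_neq0 (F : finFieldType) (c : F) (n : nat) :
  2 \in [pchar F] -> coprime n.+1 #|('GL_2[F])%g| -> lucasU c n.+1 != 0.
Proof.
move=> F2 copn; apply/negP => /eqP U0.
have Un1 : lucasU c n = 1.
  have := lucasU_cassini c n.
  rewrite lucasU_SS U0 mulr0 sub0r mulrN opprK expr2 mul0r add0r -expr2 => /eqP.
  by rewrite sqrf_eq1 (oppr_pchar2 F2) orbb => /eqP.
have : companion c ^+ n.+1 = 1.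
  by rewrite companion_pow lucasU_SS U0 Un1 mulr0 sub0r !oppr0 (oppr_pchar2 F2) mx2_1.
move/(unitmx_pow_coprime (companion_unit c) copn).
move/(congr1 (fun A : 'M[F]_2 => A 0 1)).
by rewrite !mxE /= => /eqP; rewrite oner_eq0.
Qed.

Section Tridiagonal.
Variables (F : fieldType) (n : nat).

Lemma tr_tridiag (a : F) : (tridiag n a)^T = tridiag n a.
Proof. by apply/matrixP => i j; rewrite !mxE [j == i]eq_sym orbC. Qed.

Lemma tridiag_shift (a c : F) : tridiag n (a + c) = c%:M + tridiag n a.
Proof.
apply/matrixP => i j; rewrite !mxE.
by case: (eqVneq i j) => _; rewrite ?mulr1n ?mulr0n ?add0r // addrC.
Qed.

Lemma tridiag_char2_sqr (a : F) : 2 \in [pchar F] ->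
  tridiag n (a + 1) *m tridiag n (a + 1) = 1%:M + tridiag n a *m tridiag n a.
Proof.
move=> F2; rewrite tridiag_shift mulmxDl !mulmxDr !mul1mx mulmx1 addrA.
by rewrite -(addrA 1%:M) -mulr2n -scaler_nat (pcharf0 F2) scale0r addr0.
Qed.

(* The coordinates of u as a sequence indexed from 1, padded with zeros:
   rowseq u k = u_(k-1) for 1 <= k <= n and 0 otherwise. *)
Definition rowseq (u : 'rV[F]_n) (k : nat) : F := \sum_(i < n | i.+1 == k) u 0 i.

Lemma rowseq_coord u (i : 'I_n) : rowseq u i.+1 = u 0 i.
Proof. by rewrite /rowseq (big_pred1 i). Qed.

Lemma rowseq0 u : rowseq u 0 = 0.
Proof. by rewrite /rowseq big_pred0. Qed.

Lemma rowseq_out u k : (n < k)%N -> rowseq u k = 0.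
Proof.
move=> ltnk; rewrite /rowseq big_pred0 // => i.
by apply/negbTE; apply: contraTneq ltnk => <-; rewrite -leqNgt.
Qed.

(* One summand of u T_n(b), split by the position of row i relative to j. *)
Lemma tridiag_entry_split (x b : F) (i j : nat) :
  x * (if i == j then b else if (i.+1 == j) || (j.+1 == i) then 1 else 0) =
  (if i.+1 == j then x else 0) + b * (if i.+1 == j.+1 then x else 0)
  + (if i.+1 == j.+2 then x else 0).
Proof.
rewrite !eqSS; have [<-|neij] := eqVneq i j.
  by rewrite (gtn_eqF (ltnSn i)) (ltn_eqF (ltnSn i)) add0r addr0 mulrC.
rewrite mulr0 addr0; have [<-|] := eqVneq i.+1 j.
  by rewrite (ltn_eqF (leqW (ltnSn i))) mulr1 addr0.
by case: (eqVneq j.+1 i) => [<-|]; rewrite ?mulr1 ?mulr0 ?add0r.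
Qed.

Lemma mul_tridiag_entry (b : F) u (j : 'I_n) :
  (u *m tridiag n b) 0 j = rowseq u j + b * rowseq u j.+1 + rowseq u j.+2.
Proof.
rewrite mxE /rowseq !(big_mkcond (fun i : 'I_n => _ == _)) mulr_sumr -!big_split.
by apply: eq_bigr => i _; rewrite mxE tridiag_entry_split.
Qed.

(* T_n(b) has trivial left kernel as soon as U_{n+1}(-b) does not vanish:
   the padded coordinates of a kernel vector are u_1 U_k(-b). *)
Lemma tridiag_row_kernel (b : F) (u : 'rV[F]_n) :
  lucasU (- b) n.+1 != 0 -> u *m tridiag n b = 0 -> u = 0.
Proof.
move=> Un0 uT0; set s := rowseq u.
have rec k : (k < n)%N -> s k.+2 = - b * s k.+1 - s k.
  move=> ltkn; rewrite /s.
  have := congr1 (fun v : 'rV_n => v 0 (Ordinal ltkn)) uT0.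
  rewrite /= mul_tridiag_entry mxE => /eqP; rewrite addrC addr_eq0 => /eqP /= ->.
  by rewrite opprD mulNr addrC.
have sol k : (k <= n)%N ->
    s k = s 1%N * lucasU (- b) k /\ s k.+1 = s 1%N * lucasU (- b) k.+1.
  elim: k => [|k IH] ltkn; first by rewrite /s rowseq0 mulr0 mulr1.
  have [sk sk1] := IH (ltnW ltkn); split => //.
  by rewrite rec // lucasU_SS sk sk1 mulrBr mulrCA.
have s1_0 : s 1%N = 0.
  have [_] := sol n (leqnn n); rewrite /s rowseq_out // => /esym/eqP.
  by rewrite mulf_eq0 (negbTE Un0) orbF => /eqP.
apply/rowP => i; rewrite mxE -rowseq_coord -/s.
by have [_ ->] := sol i (ltnW (ltn_ord i)); rewrite s1_0 mul0r.
Qed.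

End Tridiagonal.

(* A code is LCD whenever its Gram matrix G G^T has trivial left kernel:
   a codeword m G lying in the dual satisfies m (G G^T) = 0. *)
Lemma is_LCD_gram (F : fieldType) (k N : nat) (G : 'M[F]_(k, N)) :
  (forall m : 'rV[F]_k, m *m (G *m G^T) = 0 -> m = 0) -> is_LCD G.
Proof.
move=> gram_inj v [m ->] v_dual.
suff /gram_inj -> : m *m (G *m G^T) = 0 by rewrite mul0mx.
apply/rowP => j; rewrite mulmxA !mxE.
transitivity (edot (m *m G) (row j G)).
  by apply: eq_bigr => i _; rewrite !mxE.
by apply: v_dual; exists (delta_mx 0 j); rewrite -rowE.
Qed.

Lemma genC_gram (F : fieldType) (n : nat) (a : F) :
  genC n a *m (genC n a)^T = 1%:M + tridiag n a *m tridiag n a.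
Proof. by rewrite /genC tr_row_mx mul_row_col trmx1 mul1mx tr_tridiag. Qed.

Theorem corollary2p3 (F : finFieldType) (n : nat)
  (hq : exists k : nat, #|F| = (2 ^ k)%N)
  (hn : (1 <= n)%N)
  (hgcd : coprime n.+1 (#|F| * (#|F| ^ 2 - 1))) :
  forall a : F, is_LCD (genC n a).
Proof.
move=> a; have [k cardF] := hq.
have F2 : 2 \in [pchar F] := card_finPcharP cardF (isT : prime 2).
have copGL : coprime n.+1 #|('GL_2[F])%g|.
  by rewrite card_GL_2 coprime_card_GL2.
have U_neq0 := lucasU_char2_neq0 (- (a + 1)) F2 copGL.
apply: is_LCD_gram => m; rewrite genC_gram -(tridiag_char2_sqr n a F2) mulmxA.
by move/(tridiag_row_kernel U_neq0)/(tridiag_row_kernel U_neq0).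
Qed.
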